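(* Let \(k\geq 1\). The assignment sending a \(k\)-relational \(\mathcal{P}\mathcal{P}\)-coalgebra \((A,(\eta_i)_{i=1}^k)\) to the \(k\)-relational F-hypergraph \((A,(H_{\eta_i})_{i=1}^k)\), where \(H_\eta=\{(v,U)\mid U\in\eta(v)\}\), and acting as the identity on underlying functions, determines a functor \(k\mathbf{Coalg}(\mathcal{P}\mathcal{P})\to k\mathbf{FHGraph}\) which is bijective on objects and faithful, but not full.
   Context: \(\mathcal{P}\) is the covariant powerset functor (\(\mathcal{P}(f)(U)=f(U)\)) and \(\mathcal{P}\mathcal{P}\) its composite with itself. A \(k\)-relational \(\mathcal{P}\mathcal{P}\)-coalgebra is a set \(A\) with functions \(\eta_1,\dots,\eta_k\colon A\to\mathcal{P}\mathcal{P}(A)\); a map \((A,(\eta_i))\to(A',(\eta'_i))\) in \(k\mathbf{Coalg}(\mathcal{P}\mathcal{P})\) is a function \(f\colon A\to A'\) with \(\eta'_i\circ f=\mathcal{P}\mathcal{P}(f)\circ\eta_i\) for all \(i\). An F-hypergraph is \((A,H)\) with \(H\subseteq A\times\mathcal{P}(A)\); a \(k\)-relational F-hypergraph is \((A,(H_i)_{i=1}^k)\) with each \((A,H_i)\) an F-hypergraph; a map in \(k\mathbf{FHGraph}\) is a function \(f\colon A\to A'\) with \((f(a),f(V))\in H'_i\) whenever \((a,V)\in H_i\), for all \(i\). *)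

From mathcomp Require Import all_boot.
From mathcomp Require Import boolp classical_sets.
Set Implicit Arguments. Unset Strict Implicit. Unset Printing Implicit Defensive.
Local Open Scope classical_set_scope.

Definition Pmap (A B : Type) (f : A -> B) : set A -> set B := fun U => f @` U.
Definition PPmap (A B : Type) (f : A -> B) : set (set A) -> set (set B) :=
  Pmap (Pmap f).

Record kCoalg (k : nat) := KCoalg {
  ccar : Type;
  ceta : 'I_k -> ccar -> set (set ccar) }.
Arguments ccar {k}.
Arguments ceta {k} _ _ _.

Definition is_coalg_hom (k : nat) (C D : kCoalg k) (f : ccar C -> ccar D) : Prop :=
  forall i : 'I_k, ceta D i \o f = PPmap f \o ceta C i.

Record kFHGraph (k : nat) := KFHGraph {
  hcar : Type;
  hrel : 'I_k -> set (hcar * set hcar) }.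
Arguments hcar {k}.
Arguments hrel {k} _ _.

Definition is_fhg_hom (k : nat) (G H : kFHGraph k) (f : hcar G -> hcar H) : Prop :=
  forall (i : 'I_k) (a : hcar G) (V : set (hcar G)),
    hrel G i (a, V) -> hrel H i (f a, f @` V).

Definition Hof (A : Type) (eta : A -> set (set A)) : set (A * set A) :=
  [set p | eta p.1 p.2].

Definition F_obj (k : nat) (C : kCoalg k) : kFHGraph k :=
  @KFHGraph k (ccar C) (fun i => Hof (ceta C i)).

Definition F_mor (k : nat) (C D : kCoalg k) (f : ccar C -> ccar D) :
  hcar (F_obj C) -> hcar (F_obj D) := f.

(* A coalgebra morphism f satisfies eta'(f a) = {f(U) | U in eta(a)}, so U in eta(a) gives
   f(U) in eta'(f a): F preserves morphisms, and it is the identity on maps, hence a faithful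
   functor. A k-relational F-hypergraph is the same data as a k-relational PP-coalgebra
   (currying H_i into a map A -> PP(A)), so F is bijective on objects. It is not full
   because F-hypergraph morphisms only need to preserve edges, while coalgebra morphisms
   must also reflect them: on a one-point carrier, the identity is an F-hypergraph morphism
   from the edgeless structure to the complete one, but PP(f) maps the empty family to the
   empty family, so no coalgebra morphism exists between them. *)
From mathcomp Require Import all_boot.
From mathcomp Require Import boolp classical_sets.

Set Implicit Arguments.
Unset Strict Implicit.
Unset Printing Implicit Defensive.
Local Open Scope classical_set_scope.

Section Relational.

Variable k : nat.

Lemma coalg_hom_fhg_hom (C D : kCoalg k) (f : ccar C -> ccar D) :
  is_coalg_hom f -> is_fhg_hom (F_mor f).
Proof.
move=> homf i a V /= etaV.
rewrite /Hof /= /F_mor; have /= -> := congr1 (fun g => g a) (homf i).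
by exists V.
Qed.

Definition coalg_of_fhgraph (G : kFHGraph k) : kCoalg k :=
  @KCoalg k (hcar G) (fun i a U => hrel G i (a, U)).

Lemma F_objK : cancel (@F_obj k) coalg_of_fhgraph.
Proof. by case. Qed.

Lemma coalg_of_fhgraphK : cancel coalg_of_fhgraph (@F_obj k).
Proof.
case=> A H; rewrite /F_obj /=; congr KFHGraph.
by apply/funext => i; apply/funext => -[].
Qed.

Lemma fhg_hom_to_complete (G H : kFHGraph k) (h : hcar G -> hcar H) :
  (forall i p, hrel H i p) -> is_fhg_hom h.
Proof. by move=> completeH i a V _; apply: completeH. Qed.

Lemma coalg_hom_empty (C D : kCoalg k) (f : ccar C -> ccar D) (i : 'I_k) (a : ccar C) :
  is_coalg_hom f -> ceta C i a = set0 -> ceta D i (f a) = set0.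
Proof.
move=> homf eta_a0.
have /= -> := congr1 (fun g => g a) (homf i).
by rewrite eta_a0 /PPmap /Pmap image_set0.
Qed.

Definition point_coalg (U : set (set unit)) : kCoalg k :=
  @KCoalg k unit (fun _ _ => U).

Lemma no_coalg_hom_to_nonempty (U : set (set unit)) (i : 'I_k) (f : unit -> unit) :
  U !=set0 -> ~ is_coalg_hom (f : ccar (point_coalg set0) -> ccar (point_coalg U)).
Proof.
move=> [V UV] homf.
have U0 : U = set0 :=
  @coalg_hom_empty (point_coalg set0) (point_coalg U) f i tt homf erefl.
by rewrite U0 in UV.
Qed.

End Relational.

Theorem proposition3p14 (k : nat) (hk : 1 <= k) :
  (* F sends morphisms to morphisms *)
  (forall (C D : kCoalg k) (f : ccar C -> ccar D),
      is_coalg_hom f -> is_fhg_hom (F_mor f)) /\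
  (* functoriality: identities and composites are preserved *)
  (forall C : kCoalg k, F_mor (@id (ccar C)) = @id (hcar (F_obj C))) /\
  (forall (C D E : kCoalg k) (f : ccar C -> ccar D) (g : ccar D -> ccar E),
      F_mor (g \o f) = F_mor g \o F_mor f) /\
  (* bijective on objects *)
  (forall C D : kCoalg k, F_obj C = F_obj D -> C = D) /\
  (forall G : kFHGraph k, exists C : kCoalg k, F_obj C = G) /\
  (* faithful *)
  (forall (C D : kCoalg k) (f g : ccar C -> ccar D),
      is_coalg_hom f -> is_coalg_hom g -> F_mor f = F_mor g -> f = g) /\
  (* not full *)
  (exists (C D : kCoalg k) (h : hcar (F_obj C) -> hcar (F_obj D)),
      is_fhg_hom h /\
      ~ (exists f : ccar C -> ccar D, is_coalg_hom f /\ F_mor f = h)).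
Proof.
split; first exact: coalg_hom_fhg_hom.
split; first by [].
split; first by [].
split; first exact: can_inj (@F_objK k).
split; first by move=> G; exists (coalg_of_fhgraph G); apply: coalg_of_fhgraphK.
split; first by [].
exists (point_coalg k set0), (point_coalg k setT), id.
split; first exact: fhg_hom_to_complete.
move=> [f [homf _]].
by apply: (no_coalg_hom_to_nonempty (Ordinal hk) _ homf); exists set0.
Qed.
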